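(* Let $D$ be an $m\times n$ array and $h$ a positive integer. Let $D\otimes J_{h,1}$ be the $mh\times n$ array in which cell $((r-1)h+s,\,c)$, for $r\in[1,m]$, $s\in[1,h]$, $c\in[1,n]$, is filled if and only if $(r,c)$ is filled in $D$. Then the $h$-knight is a solution to $T(D)$ if and only if the bishop is a solution to $T(D\otimes J_{h,1})$.
   Context: Arrays are partially filled and toroidal; $F(B)$ denotes the filled cells; every row and column contains a filled cell. $s_R(i,j)=(i,j+t)$, $s_C(i,j)=(i+t,j)$ with $t\ge1$ minimal such that the cell is filled. The $a$-knight is $N_a=s_C\circ s_R^{a}$; the bishop is $N_1=s_C\circ s_R$. A move function is a solution to $T(B)$ if it is a permutation of $F(B)$ forming a single cycle of length $|F(B)|$. *)

From mathcomp Require Import all_boot.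
Set Implicit Arguments. Unset Strict Implicit. Unset Printing Implicit Defensive.

(* An m x n (toroidal) partially filled array is represented by its set of
   filled cells F(B) : {set 'I_m * 'I_n}; rows/columns are 0-indexed. *)

Definition wf_array m n (B : {set 'I_m * 'I_n}) : Prop :=
  (forall i : 'I_m, exists j : 'I_n, (i, j) \in B) /\
  (forall j : 'I_n, exists i : 'I_m, (i, j) \in B).

Lemma ord_pos n (j : 'I_n) : 0 < n.
Proof. exact: leq_ltn_trans (leq0n j) (ltn_ord j). Qed.

Definition ord_add n (j : 'I_n) (k : nat) : 'I_n :=
  Ordinal (ltn_pmod (j + k) (ord_pos j)).

Definition row_gap m n (B : {set 'I_m * 'I_n}) (x : 'I_m * 'I_n) : nat :=
  (find (fun t => (x.1, ord_add x.2 t.+1) \in B) (iota 0 n)).+1.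

Definition col_gap m n (B : {set 'I_m * 'I_n}) (x : 'I_m * 'I_n) : nat :=
  (find (fun t => (ord_add x.1 t.+1, x.2) \in B) (iota 0 m)).+1.

Definition sR m n (B : {set 'I_m * 'I_n}) (x : 'I_m * 'I_n) : 'I_m * 'I_n :=
  (x.1, ord_add x.2 (row_gap B x)).

Definition sC m n (B : {set 'I_m * 'I_n}) (x : 'I_m * 'I_n) : 'I_m * 'I_n :=
  (ord_add x.1 (col_gap B x), x.2).

Definition knight m n (B : {set 'I_m * 'I_n}) (a : nat) : 'I_m * 'I_n -> 'I_m * 'I_n :=
  fun x => sC B (iter a (sR B) x).

Definition bishop m n (B : {set 'I_m * 'I_n}) := knight B 1.

Definition is_solution m n (B : {set 'I_m * 'I_n})
    (f : 'I_m * 'I_n -> 'I_m * 'I_n) : Prop :=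
  [/\ {in B, forall x, f x \in B},
      {in B &, injective f} &
      {in B, forall x, order f x = #|B| } ].

(* D (x) J_{h,1}: the (m*h) x n array whose cell (R, c) is filled iff
   (R %/ h, c) is filled in D (0-indexed version of ((r-1)h+s, c)). *)
Definition kron_col m n (h : nat) (D : {set 'I_m * 'I_n}) : {set 'I_(m * h) * 'I_n} :=
  [set x : 'I_(m * h) * 'I_n |
     [exists y in D, (x.1 %/ h == y.1 :> nat) && (x.2 == y.2 :> nat)]].

From mathcomp Require Import all_boot.
Set Implicit Arguments. Unset Strict Implicit. Unset Printing Implicit Defensive.

(* Index the rows of D (x) J_{h,1} as r h + s with 0 <= s < h.  Row moves of
   the big array are those of D in row r, while a column move from level s
   goes one level down in the same block if s < h - 1, and from the last level
   jumps to the top of the block of the next filled cell of D in that column.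
   Hence h bishop moves starting from a top cell (r h, c) pass through the
   levels 0, ..., h - 1 and land on the top cell over the h-knight image of
   (r, c): the h-knight is the first-return map of the bishop to the top
   cells, with constant return time h.  As the big array has h |F(D)| filled
   cells, one map is a single cycle iff the other is. *)

(* [is_solution] on an arbitrary finite type; on arrays the two are
   convertible. *)
Definition single_cycle_on (T : finType) (f : T -> T) (B : {set T}) : Prop :=
  [/\ {in B, forall x, f x \in B}, {in B &, injective f}
    & {in B, forall x, order f x = #|B|}].

Lemma iter_mul_fix (T : Type) (f : T -> T) n q x :
  iter n f x = x -> iter (q * n) f x = x.
Proof. by move=> fix_x; elim: q => // q IHq; rewrite mulSn iterD IHq fix_x. Qed.

Section IterOrder.

Variables (T : finType) (f : T -> T).

Lemma order_dvdn_in (S : {pred T}) :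
  {homo f : x / x \in S} -> {in S &, injective f} ->
  {in S, forall x k, (order f x %| k) = (iter k f x == x)}.
Proof.
move=> fS injf x xS k.
have fix_x : iter (order f x) f x = x := iter_order_in fS injf xS.
rewrite {2}(divn_eq k (order f x)) addnC iterD iter_mul_fix // /dvdn.
have : k %% order f x < order f x by rewrite ltn_mod order_gt0.
case: (k %% _) => [|r lt_r]; first by rewrite !eqxx.
apply/esym/negbTE/eqP => fix_r.
by have := findex_iter lt_r; rewrite fix_r findex0.
Qed.

Lemma single_cycle_on_of_period (B : {set T}) x0 :
  {in B, forall x, f x \in B} -> x0 \in B ->
  (forall k, (#|B| %| k) = (iter k f x0 == x0)) -> single_cycle_on f B.
Proof.
move=> fB x0B period.
have cycle_x0 : fcycle f (orbit f x0).
  apply/(orbitPcycle 3 0); exists #|B|.-1.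
  rewrite prednK; first by apply/eqP; rewrite -period.
  by rewrite card_gt0; apply/set0Pn; exists x0.
have /injectivePcycle inj_orbit := cycle_x0.
have order_x0 : order f x0 = #|B|.
  have period_x0 := order_dvdn_in (@mem_orbit _ f x0) inj_orbit (in_orbit f x0).
  by apply/eqP; rewrite eqn_dvd period_x0 -period dvdnn period -period_x0 dvdnn.
have orbit_B : orbit f x0 =i B.
  move=> y; rewrite -fconnect_orbit; move: y; apply/subset_cardP => //.
  by apply/subsetP => y /iter_findex <-; apply: iter_in.
split=> // [x y xB yB | x xB]; first by apply: inj_orbit; rewrite orbit_B.
by rewrite -order_x0; apply: (eq_order_cycle cycle_x0); rewrite orbit_B.
Qed.

End IterOrder.

Section FirstReturn.

Variables (T U : finType) (f : T -> T) (g : U -> U).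
Variables (B : {set T}) (A : {set U}) (phi : U -> T) (h : nat).
Hypotheses (fB : {in B, forall x, f x \in B}) (gA : {in A, forall y, g y \in A}).
Hypotheses (phiA : {in A, forall y, phi y \in B}) (phi_inj : {in A &, injective phi}).
Hypothesis h_gt0 : 0 < h.
Hypothesis iter_phi : {in A, forall y, iter h f (phi y) = phi (g y)}.
Hypothesis first_return :
  {in A &, forall y z s, 0 < s < h -> iter s f (phi y) != phi z}.

Lemma iter_mul_phi : {in A, forall y k, iter (k * h) f (phi y) = phi (iter k g y)}.
Proof.
move=> y yA; elim=> // k IHk.
by rewrite mulSn iterD IHk iter_phi // (iter_in _ gA).
Qed.

Lemma iter_mul_phi_fix :
  {in A, forall y k, (iter (k * h) f (phi y) == phi y) = (iter k g y == y)}.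
Proof.
move=> y yA k; rewrite iter_mul_phi //.
by apply/eqP/eqP => [/phi_inj -> // | -> //]; apply: (iter_in _ gA).
Qed.

Lemma return_time_dvdn : {in A, forall y k, iter k f (phi y) = phi y -> h %| k}.
Proof.
move=> y yA k; rewrite {1}(divn_eq k h) addnC iterD iter_mul_phi //.
have [r0 | r_gt0] := posnP (k %% h); first by rewrite /dvdn r0.
move/eqP; rewrite (negbTE (first_return _ _ _)) ?(iter_in _ gA) //.
by rewrite r_gt0 ltn_mod.
Qed.

Theorem first_return_single_cycle :
  #|B| = h * #|A| -> single_cycle_on g A <-> single_cycle_on f B.
Proof.
move=> card_B; have [A0 | [y0 y0A]] := set_0Vmem A.
  have B0 : B = set0 by apply/eqP; rewrite -cards_eq0 card_B A0 cards0 muln0.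
  by rewrite A0 B0; split=> _; split=> x; rewrite inE.
split=> [[_ g_inj g_order] | [_ f_inj f_order]].
- apply: (single_cycle_on_of_period fB (phiA y0A)) => k.
  have g_period := order_dvdn_in gA g_inj y0A.
  apply/idP/idP => [/dvdnP[q ->] | /eqP fix_k].
    by rewrite card_B mulnCA mulnC iter_mul_phi_fix // -g_period g_order // dvdn_mull.
  have /dvdnP[q k_eq] := return_time_dvdn y0A fix_k.
  move/eqP: fix_k; rewrite k_eq iter_mul_phi_fix // -g_period g_order //.
  by rewrite card_B mulnC dvdn_pmul2r.
- apply: (single_cycle_on_of_period gA y0A) => k.
  rewrite -(dvdn_pmul2l h_gt0) -card_B -(f_order _ (phiA y0A)).
  by rewrite (order_dvdn_in fB f_inj (phiA y0A)) mulnC iter_mul_phi_fix.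
Qed.

End FirstReturn.

Lemma ord_add0 n (j : 'I_n) : ord_add j 0 = j.
Proof. by apply/val_inj; rewrite /= addn0 modn_small. Qed.

Lemma ord_addn n (j : 'I_n) : ord_add j n = j.
Proof. by apply/val_inj; rewrite /= modnDr modn_small. Qed.

Lemma ord_addA n (j : 'I_n) a b : ord_add (ord_add j a) b = ord_add j (a + b).
Proof. by apply/val_inj; rewrite /= modnDml addnA. Qed.

Lemma find_iota_holds (P : pred nat) n t :
  t < n -> P t -> P (find P (iota 0 n)).
Proof.
move=> lt_tn Pt; have has_P : has P (iota 0 n).
  by apply/hasP; exists t; rewrite // mem_iota.
by have := nth_find 0 has_P; rewrite nth_iota // -{2}(size_iota 0 n) -has_find.
Qed.

Lemma find_iota_muln (P Q : pred nat) m h :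
  0 < h -> (forall t, P t = Q (t %/ h)) ->
  find P (iota 0 (m * h)) = find Q (iota 0 m) * h.
Proof.
move=> h_gt0; elim: m P Q => [|m IHm] P Q PQ; first by rewrite !mul0n.
have [Q0 | nQ0] := boolP (Q 0).
  have : 0 < m.+1 * h by rewrite muln_gt0.
  by case: (m.+1 * h) => //= N _; rewrite PQ div0n Q0.
rewrite mulSn iotaD find_cat.
have -> : has P (iota 0 h) = false.
  apply/negbTE/hasPn => t; rewrite mem_iota => /andP[_ lt_th].
  by rewrite PQ divn_small.
rewrite size_iota /= (negbTE nQ0) -[h in iota h]addn0 -[1]addn0 !iotaDl !find_map.
rewrite (IHm _ (preim (addn 1) Q)) ?mulSn // => t /=.
have -> : h + t = t + 1 * h by rewrite mul1n addnC.
by rewrite PQ divnDMl // addnC.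
Qed.

Section Moves.

Variables (m n : nat) (B : {set 'I_m * 'I_n}).

Lemma sR_in x : x \in B -> sR B x \in B.
Proof.
move=> xB; have n_gt0 := ord_pos x.2.
apply: (@find_iota_holds (fun t => (x.1, ord_add x.2 t.+1) \in B) _ n.-1).
  by rewrite prednK.
by rewrite /= prednK // ord_addn -surjective_pairing.
Qed.

Lemma sC_in x : x \in B -> sC B x \in B.
Proof.
move=> xB; have m_gt0 := ord_pos x.1.
apply: (@find_iota_holds (fun t => (ord_add x.1 t.+1, x.2) \in B) _ m.-1).
  by rewrite prednK.
by rewrite /= prednK // ord_addn -surjective_pairing.
Qed.

Lemma knight_in a x : x \in B -> knight B a x \in B.
Proof. by move=> xB; apply/sC_in/iter_in/xB; apply: sR_in. Qed.

End Moves.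

Section KronCol.

Variables (m n h : nat).
Hypothesis h_gt0 : 0 < h.

Lemma ltn_kron_row (R : 'I_(m * h)) : R %/ h < m.
Proof. by rewrite ltn_divLR. Qed.

Lemma ltn_kron_base (r : 'I_m) : r * h < m * h.
Proof. by rewrite ltn_pmul2r. Qed.

Definition kron_row (R : 'I_(m * h)) : 'I_m := Ordinal (ltn_kron_row R).

Definition kron_level (R : 'I_(m * h)) : 'I_h := Ordinal (ltn_pmod R h_gt0).

Definition kron_base (r : 'I_m) : 'I_(m * h) := Ordinal (ltn_kron_base r).

Definition kron_proj (x : 'I_(m * h) * 'I_n) : 'I_m * 'I_n := (kron_row x.1, x.2).

Definition kron_cell (y : 'I_m * 'I_n) (s : nat) : 'I_(m * h) * 'I_n :=
  (ord_add (kron_base y.1) s, y.2).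

Lemma kron_row_cell (r : 'I_m) s :
  kron_row (ord_add (kron_base r) s) = ord_add r (s %/ h).
Proof. by apply/val_inj; rewrite /= -modn_divl divnMDl. Qed.

Lemma kron_proj_cell y s : s < h -> kron_proj (kron_cell y s) = y.
Proof.
move=> lt_sh; rewrite /kron_proj /= kron_row_cell divn_small //.
by rewrite ord_add0 -surjective_pairing.
Qed.

Lemma kron_level_cell y s : (kron_cell y s).1 %% h = s %% h.
Proof. by rewrite /= (@modn_dvdm (m * h)) ?dvdn_mull // modnMDl. Qed.

Lemma kron_cell_proj x : kron_cell (kron_proj x) (x.1 %% h) = x.
Proof.
case: x => R c; congr pair; apply/val_inj.
by rewrite /= -divn_eq modn_small.
Qed.

Lemma kron_cell_mul y k : kron_cell y (k * h) = kron_cell (ord_add y.1 k, y.2) 0.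
Proof.
by congr pair; apply/val_inj; rewrite /= addn0 muln_modl modn_mod mulnDl.
Qed.

Variable D : {set 'I_m * 'I_n}.
Local Notation E := (kron_col h D).

Lemma mem_kron_col x : (x \in E) = (kron_proj x \in D).
Proof.
rewrite inE; apply/existsP/idP => [[y /and3P[yD /eqP row_y /eqP col_y]] | xD].
  suff -> : kron_proj x = y by [].
  by case: y yD row_y col_y => r c /= _ row_y col_y; congr pair; apply/val_inj.
by exists (kron_proj x); rewrite xD /= !eqxx.
Qed.

Lemma card_kron_col : #|E| = h * #|D|.
Proof.
pose split x := (kron_proj x, kron_level x.1).
pose join (p : ('I_m * 'I_n) * 'I_h) := kron_cell p.1 p.2.
have splitK : cancel split join by move=> x; apply: kron_cell_proj.
have joinK : cancel join split.
  move=> [y s]; congr pair; first exact: kron_proj_cell.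
  by apply/val_inj; rewrite /= kron_level_cell modn_small.
have -> : E = split @^-1: setX D [set: 'I_h].
  by apply/setP => x; rewrite mem_kron_col !inE andbT.
rewrite on_card_preimset; last exact/onW_bij/(Bijective splitK joinK).
by rewrite cardsX cardsT card_ord mulnC.
Qed.

Lemma sR_kron_cell y s : s < h -> sR E (kron_cell y s) = kron_cell (sR D y) s.
Proof.
move=> lt_sh; congr (_, ord_add _ _.+1); apply: eq_find => t.
by rewrite mem_kron_col /kron_proj /= kron_row_cell divn_small // ord_add0.
Qed.

Lemma sC_kron_cell y s :
  sC E (kron_cell y s) =
  kron_cell y (s + (find (fun t => (ord_add y.1 ((s + t.+1) %/ h), y.2) \in D)
                          (iota 0 (m * h))).+1).
Proof.
rewrite /sC /= ord_addA; congr (ord_add _ (_ + _.+1), _); apply: eq_find => t.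
by rewrite mem_kron_col /kron_proj /= ord_addA kron_row_cell.
Qed.

Lemma sC_kron_cell_inner y s :
  y \in D -> s.+1 < h -> sC E (kron_cell y s) = kron_cell y s.+1.
Proof.
move=> yD lt_sh; rewrite sC_kron_cell.
have mh_gt0 : 0 < m * h by rewrite muln_gt0 h_gt0 (ord_pos y.1).
rewrite -[X in iota 0 X](prednK mh_gt0) /=.
by rewrite addn1 divn_small // ord_add0 -surjective_pairing yD addn1.
Qed.

Lemma sC_kron_cell_last y : y \in D -> sC E (kron_cell y h.-1) = kron_cell (sC D y) 0.
Proof.
move=> yD; rewrite sC_kron_cell.
rewrite (@find_iota_muln _ (fun u => (ord_add y.1 u.+1, y.2) \in D)) // => [|t].
  by rewrite addnS -addSn prednK // -mulSn kron_cell_mul.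
have -> : h.-1 + t.+1 = t + 1 * h by rewrite addnS -addSn prednK // mul1n addnC.
by rewrite divnDMl // addn1.
Qed.

Lemma bishop_kron_cell_inner y s :
  y \in D -> s.+1 < h -> bishop E (kron_cell y s) = kron_cell (sR D y) s.+1.
Proof.
move=> yD lt_sh; rewrite /bishop /knight /= sR_kron_cell 1?ltnW //.
by rewrite sC_kron_cell_inner // sR_in.
Qed.

Lemma bishop_kron_cell_last y :
  y \in D -> bishop E (kron_cell y h.-1) = kron_cell (knight D 1 y) 0.
Proof.
move=> yD; rewrite /bishop /knight /= sR_kron_cell ?prednK //.
by rewrite sC_kron_cell_last // sR_in.
Qed.

Lemma iter_bishop_kron_cell y s :
  y \in D -> s < h -> iter s (bishop E) (kron_cell y 0) = kron_cell (iter s (sR D) y) s.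
Proof.
move=> yD; elim: s => // s IHs lt_sh.
by rewrite iterS IHs 1?ltnW // bishop_kron_cell_inner // (iter_in _ (@sR_in _ _ D)).
Qed.

Lemma iter_bishop_kron_base y :
  y \in D -> iter h (bishop E) (kron_cell y 0) = kron_cell (knight D h y) 0.
Proof.
move=> yD; have -> : iter h (bishop E) = iter h.-1.+1 (bishop E) by rewrite prednK.
rewrite iterS iter_bishop_kron_cell ?prednK // bishop_kron_cell_last.
  by rewrite /knight /= -iterS prednK.
exact: (iter_in _ (@sR_in _ _ D)).
Qed.

Lemma bishop_first_return y z s :
  y \in D -> 0 < s < h -> iter s (bishop E) (kron_cell y 0) != kron_cell z 0.
Proof.
move=> yD /andP[s_gt0 lt_sh]; rewrite iter_bishop_kron_cell //.
apply/eqP => /(congr1 (fun x : 'I_(m * h) * 'I_n => x.1 %% h)).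
by rewrite !kron_level_cell mod0n modn_small // => s0; rewrite s0 in s_gt0.
Qed.

End KronCol.

Theorem lemma4p1 (m n h : nat) (D : {set 'I_m * 'I_n}) :
  0 < h -> wf_array D ->
  (is_solution D (knight D h) <->
   is_solution (kron_col h D) (bishop (kron_col h D))).
Proof.
move=> h_gt0 _; set E := kron_col h D.
pose phi (y : 'I_m * 'I_n) := kron_cell h_gt0 y 0.
have phi_inj : injective phi.
  by apply: (can_inj (g := kron_proj h_gt0)) => y; apply: kron_proj_cell.
apply: (@first_return_single_cycle _ _ (bishop E) (knight D h) E D phi h).
- by move=> x; apply: knight_in.
- by move=> y; apply: knight_in.
- by move=> y yD; rewrite /E mem_kron_col kron_proj_cell.
- by move=> y z _ _; apply: phi_inj.
- exact: h_gt0.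
- exact: iter_bishop_kron_base.
- by move=> y z yD _ s; apply: bishop_first_return.
- exact: card_kron_col.
Qed.
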